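(* Let $h:(\mathbb{R}^n,0)\to(\mathbb{R}^n,0)$ be a bi-Lipschitz homeomorphism germ such that $h$ (and hence $h^{-1}$) satisfies condition semiline-(SSP). Let $\overline{h}:S^{n-1}\to S^{n-1}$ be the induced map $\overline{h}(a)=\lim_{t\to0^+}h(ta)/\|h(ta)\|$. Then $\overline{h}$ extends to a bi-Lipschitz homeomorphism $\overline{h}:\mathbb{R}^n\to\mathbb{R}^n$, and for every set-germ $A\subset\mathbb{R}^n$ at $0$ with $0\in\overline{A}$ we have $\overline{h}(D(A))=D(h(LD(A)))=D(h(A))$. In particular $\dim D(A)=\dim D(h(A))$.
   Context: For a set-germ $A\subset\mathbb{R}^n$ at $0$ with $0\in\overline A$, the direction set is $D(A)=\{a\in S^{n-1}:\exists\, x_i\in A\setminus\{0\},\ x_i\to0,\ x_i/\|x_i\|\to a\}$, and $LD(A)=\{ta: a\in D(A),\ t\ge0\}$ is its real tangent cone. A semiline is a set $\{ta:t\ge0\}$ with $a\in S^{n-1}$. A homeomorphism germ $h$ satisfies condition semiline-(SSP) if for every semiline $\ell$, $D(h(\ell))$ is a single point; under this hypothesis the limit defining $\overline h(a)$ exists and equals the unique element of $D(h(\{ta:t\ge0\}))$. A bi-Lipschitz homeomorphism germ is a homeomorphism germ $h$ with $h(0)=0$ and constants $0<K_1\le K_2$ with $K_1\|x-y\|\le\|h(x)-h(y)\|\le K_2\|x-y\|$ near $0$. *)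

From HB Require Import structures.
From mathcomp Require Import all_boot all_order all_algebra.
From mathcomp Require Import all_classical all_reals all_analysis.
Set Implicit Arguments. Unset Strict Implicit. Unset Printing Implicit Defensive.
Import Order.TTheory GRing.Theory Num.Theory.
Import numFieldNormedType.Exports.
Local Open Scope classical_set_scope.
Local Open Scope ring_scope.

Section Defs.
Variables (R : realType) (n : nat).
Local Notation V := 'rV[R]_n.

(** Euclidean norm on R^n (the default normed-module norm on 'rV is the max norm). *)
Definition enorm (x : V) : R := Num.sqrt (\sum_(i < n) x ord0 i ^+ 2).

Definition sphere : set V := [set a | enorm a = 1].
Definition eball0 (r : R) : set V := [set x | enorm x < r].

Definition dir_set (A : set V) : set V :=
  [set a | a \in sphere /\
     exists u : nat -> V, (forall k, A (u k) /\ u k != 0) /\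
       u @ \oo --> (0 : V) /\
       (fun k => (enorm (u k))^-1 *: u k) @ \oo --> a].

Definition LD (A : set V) : set V := [set x | exists t : R, exists2 a, dir_set A a & 0 <= t /\ x = t *: a].

Definition semiline (a : V) : set V := [set x | exists2 t : R, 0 <= t & x = t *: a].

Definition bilipschitz_on (U : set V) (h : V -> V) :=
  exists K1 K2 : R, [/\ 0 < K1, K1 <= K2 &
    forall x y, U x -> U y ->
      K1 * enorm (x - y) <= enorm (h x - h y) /\ enorm (h x - h y) <= K2 * enorm (x - y)].

Definition hbar (h : V -> V) (a : V) : V :=
  lim ((fun t : R => (enorm (h (t *: a)))^-1 *: h (t *: a)) @ 0^'+).

Definition ediam (E : set V) : \bar R :=
  ereal_sup [set z | exists x y, [/\ E x, E y & z = (enorm (x - y))%:E]].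

Definition hcover_term (s : R) (U : set V) : \bar R :=
  if pselect (U = set0) then 0%E else ((fine (ediam U)) `^ s)%:E.

Definition hausdorff_pre (s d : R) (E : set V) : \bar R :=
  ereal_inf [set (\sum_(0 <= k <oo) hcover_term s (U k))%E
            | U in [set U : nat -> set V |
                     E `<=` \bigcup_k U k /\ forall k, (ediam (U k) <= d%:E)%E]].

Definition hausdorff_measure (s : R) (E : set V) : \bar R :=
  ereal_sup [set hausdorff_pre s d E | d in [set d : R | 0 < d]].

Definition hausdorff_dim (E : set V) : \bar R :=
  ereal_inf [set s%:E | s in [set s : R | 0 <= s /\ hausdorff_measure s E = 0%E]].

End Defs.

Arguments sphere {R n}.
Arguments eball0 {R n}.

From HB Require Import structures.
From mathcomp Require Import all_boot all_order all_algebra.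
From mathcomp Require Import all_classical all_reals all_analysis.
Import Order.TTheory GRing.Theory Num.Theory.
Import numFieldNormedType.Exports.
Local Open Scope classical_set_scope.
Local Open Scope ring_scope.
From mathcomp Require Import ring lra.
Set Implicit Arguments. Unset Strict Implicit. Unset Printing Implicit Defensive.

(* Since K1 |x| <= |h x| <= K2 |x| near 0, the curve t |-> h(ta)/|h(ta)| stays on the
   sphere, and semiline-(SSP) makes its cluster set as t -> 0+, hence its limit, the single
   point hbar(a).  Comparing h(ta) with h(ta') gives |hbar a - hbar a'| <= (2K2/K1)|a - a'|;
   comparing h(ta) with the point h(t'a') of the same norm (intermediate value theorem) gives
   the reverse bound with constant K1/(2K2).  The same estimates and the compactness of the
   sphere give D(h(A)) = hbar(D(A)), and D(LD(A)) = D(A).  The radial map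
   x |-> |x| hbar(x/|x|) is a bi-Lipschitz bijection of R^n extending hbar, and bi-Lipschitz
   bijections preserve Hausdorff dimension because Lipschitz maps preserve H^s-null sets. *)

Lemma CauchySchwarz_sum (R : rcfType) (I : finType) (a b : I -> R) :
  \sum_i a i * b i <= Num.sqrt (\sum_i a i ^+ 2) * Num.sqrt (\sum_i b i ^+ 2).
Proof.
set A := \sum_i a i ^+ 2; set B := \sum_i b i ^+ 2.
have sum_sqr_eq0 (c : I -> R) : \sum_i c i ^+ 2 = 0 -> c =1 fun=> 0.
  move=> c0 i; apply/eqP; rewrite -sqrf_eq0; apply/eqP.
  exact: (@psumr_eq0P _ _ predT (fun i => c i ^+ 2) (fun i _ => sqr_ge0 (c i)) c0 i isT).
have [A0|Anz] := eqVneq A 0.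
  by rewrite big1 ?A0 ?sqrtr0 ?mul0r // => i _; rewrite (sum_sqr_eq0 a A0 i) mul0r.
have [B0|Bnz] := eqVneq B 0.
  by rewrite B0 sqrtr0 mulr0 big1 // => i _; rewrite (sum_sqr_eq0 b B0 i) mulr0.
have A_ge0 : 0 <= A by apply: sumr_ge0 => i _; rewrite sqr_ge0.
have B_ge0 : 0 <= B by apply: sumr_ge0 => i _; rewrite sqr_ge0.
set al := Num.sqrt A; set be := Num.sqrt B.
have al0 : 0 < al by rewrite sqrtr_gt0 lt_neqAle eq_sym Anz.
have be0 : 0 < be by rewrite sqrtr_gt0 lt_neqAle eq_sym Bnz.
have alA : al ^+ 2 = A by rewrite sqr_sqrtr.
have beB : be ^+ 2 = B by rewrite sqr_sqrtr.
(* Expand \sum_i (a i * be - b i * al) ^+ 2 >= 0. *)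
have key : 2 * (\sum_i a i * b i) * (al * be) <= A * be ^+ 2 + B * al ^+ 2.
  rewrite /A /B !mulr_suml -big_split /= mulr_sumr mulr_suml; apply: ler_sum => i _.
  have := sqr_ge0 (a i * be - b i * al); nra.
rewrite -(ler_pM2r (mulr_gt0 al0 be0)).
move: key; rewrite -{1}alA -{1}beB; nra.
Qed.

Section EuclideanNorm.
Variables (R : realType) (n : nat).
Local Notation V := 'rV[R]_n.
Local Notation en := (@enorm R n).
Implicit Types x y : V.

Lemma enorm_ge0 x : 0 <= en x.
Proof. exact: sqrtr_ge0. Qed.

Lemma enorm_sqr x : en x ^+ 2 = \sum_(i < n) x ord0 i ^+ 2.
Proof. by rewrite sqr_sqrtr // sumr_ge0 // => i _; rewrite sqr_ge0. Qed.

Lemma enorm0 : en 0 = 0.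
Proof. by rewrite /enorm big1 ?sqrtr0 // => i _; rewrite mxE expr0n. Qed.

Lemma enorm_eq0 x : en x = 0 -> x = 0.
Proof.
move=> x0; apply/rowP => i; rewrite mxE; apply/eqP; rewrite -sqrf_eq0; apply/eqP.
have sum0 : \sum_(j < n) x ord0 j ^+ 2 = 0 by rewrite -enorm_sqr x0 expr0n.
exact: (@psumr_eq0P _ _ predT _ (fun j _ => sqr_ge0 (x ord0 j)) sum0 i isT).
Qed.

Lemma enorm_gt0 x : x != 0 -> 0 < en x.
Proof.
by move=> x0; rewrite lt_neqAle enorm_ge0 andbT eq_sym; apply: contra_neq x0; apply: enorm_eq0.
Qed.

Lemma enormZ (t : R) x : en (t *: x) = `|t| * en x.
Proof.
rewrite /enorm (eq_bigr (fun i => t ^+ 2 * x ord0 i ^+ 2)); last first.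
  by move=> i _; rewrite mxE exprMn.
by rewrite -mulr_sumr sqrtrM ?sqr_ge0 // sqrtr_sqr.
Qed.

Lemma enormN x : en (- x) = en x.
Proof. by rewrite -scaleN1r enormZ normrN normr1 mul1r. Qed.

Lemma enorm_distC x y : en (x - y) = en (y - x).
Proof. by rewrite -enormN opprB. Qed.

Lemma ler_enormD x y : en (x + y) <= en x + en y.
Proof.
rewrite -(@ler_pXn2r _ 2) ?nnegrE ?addr_ge0 ?enorm_ge0 //.
rewrite sqrrD !enorm_sqr (eq_bigr (fun i => x ord0 i ^+ 2 + y ord0 i ^+ 2
  + 2 * (x ord0 i * y ord0 i))); last by move=> i _; rewrite mxE; ring.
rewrite !big_split /= -mulr_sumr.
have := CauchySchwarz_sum (fun i => x ord0 i) (fun i => y ord0 i).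
rewrite -/(enorm x) -/(enorm y); lra.
Qed.

Lemma ler_enorm_distD (u v w : V) : en (v - w) <= en (v - u) + en (u - w).
Proof. by have := ler_enormD (v - u) (u - w); rewrite addrA subrK. Qed.

Lemma ler_enorm_dist_dist x y : `|en x - en y| <= en (x - y).
Proof.
have lerB_enorm u v : en u - en v <= en (u - v).
  by have := ler_enormD (u - v) v; rewrite subrK; lra.
by rewrite ler_norml lerB_enorm andbT; have := lerB_enorm y x; rewrite enorm_distC; lra.
Qed.

Lemma normr_le_enorm x : `|x| <= en x.
Proof.
rewrite [`|x|]mx_normrE; apply: bigmax_le; first exact: enorm_ge0.
move=> [i j] _ /=; rewrite (ord1 i) -sqrtr_sqr ler_wsqrtr //.
by rewrite (bigD1 j) //= lerDl sumr_ge0 // => k _; rewrite sqr_ge0.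
Qed.

Lemma enorm_le_normr x : en x <= n%:R * `|x|.
Proof.
rewrite -(@ler_pXn2r _ 2) ?nnegrE ?mulr_ge0 ?enorm_ge0 // enorm_sqr.
apply: (@le_trans _ _ (\sum_(i < n) `|x| ^+ 2)).
  apply: ler_sum => i _; rewrite -real_normK ?num_real // lerXn2r ?nnegrE //.
  by rewrite [`|x|]mx_normrE (le_bigmax _ (fun ij : 'I_1 * 'I_n => `|x ij.1 ij.2|) (ord0, i)).
rewrite sumr_const card_ord exprMn -[X in X <= _]mulr_natl; apply: ler_wpM2r; first exact: sqr_ge0.
by rewrite expr2 -natrM ler_nat; case: (n) => // m; rewrite leq_pmulr.
Qed.

(* The norm of the normed module 'rV is the max norm, which is equivalent to enorm. *)
Lemma cvg_enormP (T : Type) (F : set_system T) (FF : Filter F) (f : T -> V) (l : V) :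
  f @ F --> l <-> forall e, 0 < e -> \forall t \near F, en (f t - l) < e.
Proof.
split => [/cvgrPdist_lt fl e e0 | fl].
  have n1_gt0 : 0 < n%:R + 1 :> R by rewrite ltr_wpDl.
  apply: filterS (fl _ (divr_gt0 e0 n1_gt0)) => t /= flt.
  apply: le_lt_trans (enorm_le_normr _) _; rewrite distrC in flt.
  apply: le_lt_trans (ler_wpM2l (ler0n _ n) (ltW flt)) _.
  by rewrite mulrA ltr_pdivrMr // mulrC ltr_pM2l // ltrDl.
apply/cvgrPdist_lt => e e0; apply: filterS (fl _ e0) => t flt.
by rewrite distrC; apply: le_lt_trans (normr_le_enorm _) flt.
Qed.

Lemma nbhs_enorm_lt (c : V) e : 0 < e -> nbhs c [set v | en (v - c) < e].
Proof. by move=> e0; apply: (proj1 (@cvg_enormP _ (nbhs c) _ id c) _ e e0); apply: cvg_id. Qed.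

Lemma continuous_enorm : continuous en.
Proof.
move=> x; apply/(@cvgrPdist_lt _ _ _ _ (nbhs_filter x)) => e e0.
apply: filterS (nbhs_enorm_lt x e0) => y /= xy.
by apply: le_lt_trans (ler_enorm_dist_dist _ _) _; rewrite enorm_distC.
Qed.

Lemma compact_sphere : compact (@sphere R n).
Proof.
apply: bounded_closed_compact.
  apply: filterS (nbhs_pinfty_ge (num_real 1)) => M M1 x /= sx.
  by apply: le_trans (normr_le_enorm x) _; rewrite sx.
have -> : sphere = en @^-1` [set 1] by [].
by apply: (proj1 (continuous_closedP _)) continuous_enorm _ _; apply: closed_eq.
Qed.
End EuclideanNorm.

Section Directions.
Variables (R : realType) (n : nat).
Local Notation V := 'rV[R]_n.
Local Notation en := (@enorm R n).
Implicit Types p q x y a : V.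

Definition normalize x : V := (en x)^-1 *: x.

Lemma normalize0 : normalize 0 = 0.
Proof. by rewrite /normalize scaler0. Qed.

Lemma enorm_scale_normalize x : en x *: normalize x = x.
Proof.
have [->|x0] := eqVneq x 0; first by rewrite normalize0 scaler0.
by rewrite /normalize scalerA mulfV ?scale1r // gt_eqF // enorm_gt0.
Qed.

Lemma sphere_normalize x : x != 0 -> sphere (normalize x).
Proof.
move=> x0; rewrite /sphere /= /normalize enormZ ger0_norm ?invr_ge0 ?enorm_ge0 //.
by rewrite mulVf // gt_eqF // enorm_gt0.
Qed.

Lemma enorm_normalize_le1 x : en (normalize x) <= 1.
Proof.
have [->|x0] := eqVneq x 0; first by rewrite normalize0 enorm0.
by rewrite (sphere_normalize x0).
Qed.

Lemma enormZ_sphere (t : R) a : 0 <= t -> sphere a -> en (t *: a) = t.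
Proof. by move=> t0 sa; rewrite enormZ ger0_norm // sa mulr1. Qed.

Lemma normalizeZ_sphere (t : R) a : 0 < t -> sphere a -> normalize (t *: a) = a.
Proof.
move=> t0 sa; rewrite /normalize enormZ_sphere ?ltW // scalerA mulVf ?scale1r //.
by rewrite gt_eqF.
Qed.

Lemma scale_sphere_neq0 (t : R) a : 0 < t -> sphere a -> t *: a != 0.
Proof.
move=> t0 sa; apply/eqP => ta0; have := enormZ_sphere (ltW t0) sa.
by rewrite ta0 enorm0 => /eqP; rewrite eq_sym gt_eqF.
Qed.

Lemma normalize_decomp x y :
  x - y = en x *: (normalize x - normalize y) + (en x - en y) *: normalize y.
Proof. by rewrite scalerBr scalerBl !enorm_scale_normalize addrA subrK. Qed.

Lemma ler_enorm_normalizeB p q : en p * en (normalize p - normalize q) <= 2 * en (p - q).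
Proof.
have decomp : en p *: (normalize p - normalize q) = (p - q) + (en q - en p) *: normalize q.
  by rewrite scalerBr scalerBl !enorm_scale_normalize addrA subrK.
have := ler_enormD (p - q) ((en q - en p) *: normalize q).
rewrite -decomp (enormZ (en p)) (enormZ (en q - en p)) ger0_norm ?enorm_ge0 //.
have := ler_enorm_dist_dist q p; rewrite enorm_distC.
have := enorm_normalize_le1 q; have := normr_ge0 (en q - en p); nra.
Qed.

Lemma exists_cluster_sphere (T : Type) (F : set_system T) (PF : ProperFilter F)
    (g : T -> V) :
  F (fun t => sphere (g t)) ->
  exists2 c, sphere c & forall e A, 0 < e -> F A -> exists t, A t /\ en (g t - c) < e.
Proof.
move=> Fs; have [c [sc clc]] := compact_sphere (fmap_proper_filter g PF) Fs.
exists c => // e A e0 FA.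
have FgA : (g @ F) (g @` A) by rewrite /fmap /=; apply: filterS FA => t At; exists t.
by have [_ [[t At <-] gtc]] := clc _ _ FgA (nbhs_enorm_lt c e0); exists t.
Qed.

Lemma dir_setP (B : set V) c : dir_set B c <->
  sphere c /\ forall e d, 0 < e -> 0 < d ->
    exists w, [/\ B w, w != 0, en w < d & en (normalize w - c) < e].
Proof.
split.
  move=> [/set_mem sc [u [Bu [/cvg_enormP u0 /cvg_enormP uc]]]]; split => // e d e0 d0.
  have [k [uk_d uk_c]] := filter_ex (filterI (u0 d d0) (uc e e0)).
  by exists (u k); split => //; [exact: (Bu k).1 | exact: (Bu k).2 | rewrite -[u k]subr0].
move=> [sc approx]; split; first exact: mem_set.
have inv_gt0 (k : nat) : 0 < k.+1%:R^-1 :> R by rewrite invr_gt0.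
have [u Hu] := choice (fun k => approx _ _ (inv_gt0 k) (inv_gt0 k)).
exists u; split; first by move=> k; have [] := Hu k.
split; apply/cvg_enormP => e e0; apply: filterS (near_infty_natSinv_lt (PosNum e0)) => k /= ke.
  by rewrite subr0; have [_ _ uk _] := Hu k; apply: lt_trans uk ke.
by have [_ _ _ uk] := Hu k; apply: lt_trans uk ke.
Qed.

Lemma dir_set_LD (A : set V) : dir_set (LD A) = dir_set A.
Proof.
apply/seteqP; split => c /dir_setP[sc DA]; apply/dir_setP; split => // e d e0 d0.
  have e2 : 0 < e / 2 by rewrite divr_gt0.
  have [_ [[t [a Da [t0 ->]]] ta0 _ tac]] := DA _ _ e2 d0.
  have t_gt0 : 0 < t.
    by rewrite lt_neqAle t0 andbT; apply: contraNneq ta0 => <-; rewrite scale0r.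
  have /dir_setP[sa DAa] := Da.
  rewrite normalizeZ_sphere // in tac.
  have [w [Aw w0 wd wa]] := DAa _ _ e2 d0.
  by exists w; split => //; have := ler_enorm_distD a (normalize w) c; lra.
have d2 : 0 < d / 2 by rewrite divr_gt0.
exists ((d / 2) *: c); split.
- by exists (d / 2); exists c; rewrite ?dir_setP // ltW.
- exact: scale_sphere_neq0.
- by rewrite (enormZ_sphere (ltW d2) sc); lra.
- by rewrite normalizeZ_sphere // subrr enorm0.
Qed.

End Directions.

Section RealLine.
Variable R : realType.

Lemma near_at_right0P (P : R -> Prop) :
  (\forall t \near 0^'+, P t) <-> exists2 d, 0 < d & forall t, 0 < t < d -> P t.
Proof.
split => [/nbhs_ballP [d d0 Pd] | [d d0 Pd]]; exists d => // t.
  by move=> /andP[t0 td]; apply: Pd => //; rewrite /ball /= sub0r normrN gtr0_norm.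
by rewrite /ball /= sub0r normrN => td t0; apply: Pd; rewrite t0 -(gtr0_norm t0).
Qed.

Lemma continuous_lipschitz (f : R -> R) (K : R) : 0 < K ->
  (forall u v, `|f u - f v| <= K * `|u - v|) -> continuous f.
Proof.
move=> K0 f_lip z; apply/(@cvgrPdist_lt _ _ _ _ (nbhs_filter z)) => e e0.
have := proj1 (@cvgrPdist_lt _ _ _ _ (nbhs_filter z) id z) cvg_id _ (divr_gt0 e0 K0).
by apply: filterS => w zw; apply: le_lt_trans (f_lip z w) _; rewrite -ltr_pdivlMl // mulrC.
Qed.

Definition clamp (T u : R) := if u < 0 then 0 else if u < T then u else T.

Lemma clamp_lipschitz T u v : 0 <= T -> `|clamp T u - clamp T v| <= `|u - v|.
Proof.
move=> T0; have := ler_norm (u - v); have := ler_norm (v - u); rewrite distrC.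
rewrite ler_norml /clamp.
by have [] := ltP u 0; have [] := ltP v 0; have [] := ltP u T; have [] := ltP v T;
  move=> *; apply/andP; split; lra.
Qed.

Lemma clamp_id T u : 0 <= u <= T -> clamp T u = u.
Proof.
move=> /andP[u0 uT]; rewrite /clamp ltNge u0 /=.
by have [//|Tu] := ltP u T; apply/eqP; rewrite eq_le Tu uT.
Qed.

Lemma clamp_itv T u : 0 <= T -> 0 <= clamp T u <= T.
Proof.
move=> T0; rewrite /clamp; have [_|u0] := ltP u 0; first by rewrite lexx.
by have [uT|_] := ltP u T; rewrite ?lexx ?T0 // u0 ltW.
Qed.

Lemma exists_gt0_lt3 (a b c : R) : 0 < a -> 0 < b -> 0 < c ->
  exists t, [/\ 0 < t, t < a, t < b & t < c].
Proof.
move=> a0 b0 c0; exists (Num.min a (Num.min b c) / 2).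
have : 0 < Num.min a (Num.min b c) by rewrite !lt_min a0 b0 c0.
have : Num.min a (Num.min b c) <= a by rewrite ge_min lexx.
have : Num.min a (Num.min b c) <= b by rewrite !ge_min lexx orbT.
have : Num.min a (Num.min b c) <= c by rewrite !ge_min lexx !orbT.
by move=> *; split; lra.
Qed.

End RealLine.

Section SemilineSSP.
Variables (R : realType) (n : nat).
Local Notation V := 'rV[R]_n.
Local Notation en := (@enorm R n).
Implicit Types x y a : V.
Variables (h : V -> V) (r K1 K2 : R).
Hypotheses (r_gt0 : 0 < r) (h0 : h 0 = 0) (K1_gt0 : 0 < K1) (K12 : K1 <= K2).
Hypothesis h_bilip : forall x y, eball0 r x -> eball0 r y ->
  K1 * en (x - y) <= en (h x - h y) /\ en (h x - h y) <= K2 * en (x - y).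
Hypothesis h_ssp : forall a, sphere a ->
  exists b, dir_set (h @` (semiline a `&` eball0 r)) = [set b].

Let K2_gt0 : 0 < K2. Proof. exact: lt_le_trans K12. Qed.

Let eball0_0 : eball0 r (0 : V). Proof. by rewrite /eball0 /= enorm0. Qed.

Lemma enorm_h_ge x : eball0 r x -> K1 * en x <= en (h x).
Proof. by move=> rx; have [+ _] := h_bilip rx eball0_0; rewrite h0 !subr0. Qed.

Lemma enorm_h_le x : eball0 r x -> en (h x) <= K2 * en x.
Proof. by move=> rx; have [_ +] := h_bilip rx eball0_0; rewrite h0 !subr0. Qed.

Lemma h_neq0 x : eball0 r x -> x != 0 -> h x != 0.
Proof.
move=> rx x0; apply/eqP => hx0; have := enorm_h_ge rx; rewrite hx0 enorm0.
by apply/negP; rewrite -ltNge mulr_gt0 // enorm_gt0.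
Qed.

Lemma eball0_scale_sphere (t : R) a : sphere a -> 0 <= t < r -> eball0 r (t *: a).
Proof. by move=> sa /andP[t0 tr]; rewrite /eball0 /= enormZ_sphere. Qed.

Definition hdir a (t : R) := normalize (h (t *: a)).

Lemma ler_normalize_hB p q : eball0 r p -> eball0 r q -> p != 0 ->
  en p * en (normalize (h p) - normalize (h q)) <= 2 * K2 / K1 * en (p - q).
Proof.
move=> rp rq p0; set X := en (normalize (h p) - normalize (h q)).
have X_ge0 : 0 <= X := enorm_ge0 _.
have hp_ge := enorm_h_ge rp.
have hpX : en (h p) * X <= 2 * (K2 * en (p - q)).
  apply: le_trans (ler_enorm_normalizeB _ _) _.
  by rewrite ler_pM2l //; have [_] := h_bilip rp rq.
have E : K1 * (2 * K2 / K1 * en (p - q)) = 2 * (K2 * en (p - q)).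
  by field; rewrite gt_eqF.
rewrite -(ler_pM2l K1_gt0) E; nra.
Qed.

Lemma hdir_lipschitz a a' (t : R) : sphere a -> sphere a' -> 0 < t < r ->
  en (hdir a t - hdir a' t) <= 2 * K2 / K1 * en (a - a').
Proof.
move=> sa sa' /andP[t0 tr].
have rta : eball0 r (t *: a) by apply: eball0_scale_sphere; rewrite // ltW.
have rta' : eball0 r (t *: a') by apply: eball0_scale_sphere; rewrite // ltW.
have := ler_normalize_hB rta rta' (scale_sphere_neq0 t0 sa).
rewrite (enormZ_sphere (ltW t0) sa) -scalerBr enormZ gtr0_norm // mulrCA ler_pM2l //.
Qed.

Lemma hdir_normalize_close a x : sphere a -> eball0 r x -> x != 0 ->
  en (hdir a (en x) - normalize (h x)) <= 2 * K2 / K1 * en (normalize x - a).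
Proof.
move=> sa rx x0; have x_gt0 := enorm_gt0 x0.
have rxa : eball0 r (en x *: a) by apply: eball0_scale_sphere; rewrite // enorm_ge0.
have := ler_normalize_hB rxa rx (scale_sphere_neq0 x_gt0 sa).
rewrite (enormZ_sphere (enorm_ge0 x) sa) -[X in en (_ *: a - X)](enorm_scale_normalize x).
by rewrite -scalerBr enormZ gtr0_norm // mulrCA ler_pM2l // (enorm_distC a).
Qed.

Lemma hdir_cvg a b : sphere a -> dir_set (h @` (semiline a `&` eball0 r)) = [set b] ->
  hdir a @ 0^'+ --> b.
Proof.
move=> sa Db; apply/cvg_enormP => e e0; apply: contrapT => not_near.
(* Along the times t where hdir a t stays e-away from b, a cluster point would give a
   second direction. *)
pose Q t := 0 < t /\ ~ (en (hdir a t - b) < e).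
have PF : ProperFilter (within Q (nbhs (0 : R))).
  apply: within_nbhs_proper => B NB; apply: contrapT => noQB; apply: not_near.
  by apply: filterS NB => t Bt t0; apply: contrapT => far; apply: noQB; exists t.
have near_r := num_topology.nbhs0_lt r_gt0.
have Fs : within Q (nbhs (0 : R)) (fun t => sphere (hdir a t)).
  apply: filterS near_r => t tr [t0 _]; apply/sphere_normalize/h_neq0.
    by apply: eball0_scale_sphere; rewrite // ltW.
  exact: scale_sphere_neq0.
have [c sc clc] := exists_cluster_sphere PF Fs.
have Dc : dir_set (h @` (semiline a `&` eball0 r)) c.
  apply/dir_setP; split => // e' d e'0 d0.
  have FA : within Q (nbhs (0 : R)) [set t | Q t /\ t < r /\ t < d / K2].
    apply: filterS (filterI near_r (num_topology.nbhs0_lt (divr_gt0 d0 K2_gt0))).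
    by move=> t [tr td] Qt.
  have [t [[[t0 _] [tr td]] tc]] := clc e' _ e'0 FA.
  have rta : eball0 r (t *: a) by apply: eball0_scale_sphere; rewrite // ltW.
  exists (h (t *: a)); split => //.
  - by exists (t *: a) => //; split => //; exists t => //; rewrite ltW.
  - exact/h_neq0/scale_sphere_neq0.
  - apply: le_lt_trans (enorm_h_le rta) _.
    by rewrite (enormZ_sphere (ltW t0) sa) -ltr_pdivlMl // mulrC.
have cb : c = b by move: Dc; rewrite Db.
have [t [[_ far] tc]] := clc e Q e0 (filterS (fun _ _ Qt => Qt) near_r).
by apply: far; rewrite -cb.
Qed.

Lemma hbar_dir_set a : sphere a ->
  dir_set (h @` (semiline a `&` eball0 r)) = [set hbar h a].
Proof.
move=> sa; have [b Db] := h_ssp sa.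
have hbar_b : hbar h a = b := cvg_lim (@norm_hausdorff _ _) (hdir_cvg sa Db).
by rewrite Db hbar_b.
Qed.

Lemma sphere_hbar a : sphere a -> sphere (hbar h a).
Proof.
by move=> sa; have /dir_setP[] : dir_set (h @` (semiline a `&` eball0 r)) (hbar h a);
  rewrite ?hbar_dir_set.
Qed.

Lemma hdir_cvg_hbar a : sphere a -> hdir a @ 0^'+ --> hbar h a.
Proof. by move=> sa; apply: hdir_cvg (hbar_dir_set sa). Qed.

Lemma hdir_near_hbar a (e : R) : sphere a -> 0 < e ->
  exists2 d, 0 < d & forall t, 0 < t < d -> en (hdir a t - hbar h a) < e.
Proof. by move=> sa e0; apply/near_at_right0P; move/cvg_enormP: (hdir_cvg_hbar sa); apply. Qed.

Lemma hbar_lipschitz a a' : sphere a -> sphere a' ->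
  en (hbar h a - hbar h a') <= 2 * K2 / K1 * en (a - a').
Proof.
move=> sa sa'.
have lim_dist : (fun t => en (hdir a t - hdir a' t)) @ 0^'+ --> en (hbar h a - hbar h a').
  exact: continuous_cvg (@continuous_enorm _ _ _) (cvgB (hdir_cvg_hbar sa) (hdir_cvg_hbar sa')).
apply: (closed_cvg _ (@closed_le _ _) _ _ lim_dist).
by apply/near_at_right0P; exists r => // t /(hdir_lipschitz sa sa').
Qed.

Lemma exists_scale_enorm_h a (T rho : R) : sphere a -> 0 <= T < r ->
  0 <= rho <= K1 * T -> exists2 t, 0 <= t <= T & en (h (t *: a)) = rho.
Proof.
move=> sa /andP[T0 Tr] /andP[rho0 rhoT].
pose g u := en (h (clamp T u *: a)).
have clampTT : clamp T T = T by rewrite clamp_id // T0 lexx.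
have r_clamp u : eball0 r (clamp T u *: a).
  apply: eball0_scale_sphere => //; have /andP[c0 cT] := clamp_itv u T0.
  by rewrite c0 (le_lt_trans cT Tr).
have g_cont : continuous g.
  apply: (continuous_lipschitz K2_gt0) => u v; apply: le_trans (ler_enorm_dist_dist _ _) _.
  have [_ /le_trans] := h_bilip (r_clamp u) (r_clamp v); apply.
  by rewrite -scalerBl enormZ sa mulr1 ler_pM2l // clamp_lipschitz.
have g0 : g 0 = 0 by rewrite /g clamp_id ?lexx // scale0r h0 enorm0.
have gT : K1 * T <= g T.
  by have := enorm_h_ge (r_clamp T); rewrite /g clampTT (enormZ_sphere T0 sa).
have [t t_itv gt] : exists2 t, t \in `[0, T] & g t = rho.
  apply: IVT => //; first exact: continuous_subspaceT.
  by rewrite g0 min_l ?max_r ?rho0 ?(le_trans rhoT gT) // (le_trans rho0 (le_trans rhoT gT)).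
by move: t_itv; rewrite in_itv /= => t_itv; exists t; rewrite // -gt /g clamp_id.
Qed.

(* For the lower bound, t a is compared with the point t' a' whose image has the same norm. *)
Lemma hdir_separated a a' (t : R) : sphere a -> sphere a' -> 0 < t -> t * K2 / K1 < r ->
  exists2 t', 0 < t' <= t * K2 / K1 &
    K1 / (2 * K2) * en (a - a') <= en (hdir a t - hdir a' t').
Proof.
move=> sa sa' t0 Tr; set T := t * K2 / K1.
have tT : t <= T by rewrite /T ler_pdivlMr // ler_pM2l.
have rta : eball0 r (t *: a).
  by apply: eball0_scale_sphere; rewrite // ltW //= (le_lt_trans tT).
set rho := en (h (t *: a)).
have rho_ge : K1 * t <= rho by have := enorm_h_ge rta; rewrite (enormZ_sphere (ltW t0) sa).
have rho_le : rho <= K1 * T.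
  have -> : K1 * T = K2 * t by rewrite /T; field; rewrite gt_eqF.
  by have := enorm_h_le rta; rewrite (enormZ_sphere (ltW t0) sa).
have [t' /andP[t'0 t'T] ht'] : exists2 t', 0 <= t' <= T & en (h (t' *: a')) = rho.
  apply: exists_scale_enorm_h => //; first by rewrite (le_trans (ltW t0) tT).
  by rewrite rho_le (le_trans _ rho_ge) // mulr_ge0 // ltW.
have t'_gt0 : 0 < t'.
  rewrite lt_neqAle t'0 andbT; apply/eqP => t'_0; move: ht' rho_ge.
  by rewrite -t'_0 scale0r h0 enorm0 => <-; apply/negP; rewrite -ltNge mulr_gt0.
exists t'; first by rewrite t'_gt0.
have rta' : eball0 r (t' *: a') by apply: eball0_scale_sphere; rewrite // t'0 (le_lt_trans t'T).
have img_diff : h (t *: a) - h (t' *: a') = rho *: (hdir a t - hdir a' t').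
  by rewrite scalerBr -{2}ht' !enorm_scale_normalize.
have img_le : K1 * en (t *: a - t' *: a') <= K2 * t * en (hdir a t - hdir a' t').
  have [/le_trans + _] := h_bilip rta rta'; apply.
  rewrite img_diff enormZ ger0_norm ?enorm_ge0 // ler_wpM2r ?enorm_ge0 //.
  by have := enorm_h_le rta; rewrite (enormZ_sphere (ltW t0) sa).
have dom_ge : t * en (a - a') <= 2 * en (t *: a - t' *: a').
  have := ler_enorm_normalizeB (t *: a) (t' *: a').
  by rewrite !normalizeZ_sphere // (enormZ_sphere (ltW t0) sa).
rewrite mulrAC ler_pdivrMr ?mulr_gt0 // -(ler_pM2l t0).
have := ler_wpM2l (ltW K1_gt0) dom_ge; lra.
Qed.

Lemma hbar_lower a a' : sphere a -> sphere a' ->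
  K1 / (2 * K2) * en (a - a') <= en (hbar h a - hbar h a').
Proof.
move=> sa sa'; apply/ler_addgt0Pr => e e0.
have e2 : 0 < e / 2 by rewrite divr_gt0.
have [d1 d1_gt0 near1] := hdir_near_hbar sa e2.
have [d2 d2_gt0 near2] := hdir_near_hbar sa' e2.
have K_gt0 : 0 < K1 / K2 by rewrite divr_gt0.
have [t [t0 td1 tr td2]] :=
  exists_gt0_lt3 d1_gt0 (mulr_gt0 r_gt0 K_gt0) (mulr_gt0 d2_gt0 K_gt0).
have tK_lt s : t < s * (K1 / K2) -> t * K2 / K1 < s.
  by move=> ts; rewrite ltr_pdivrMr // -ltr_pdivlMr // -mulrA.
have [t' /andP[t'0 t'T] sep] := hdir_separated sa sa' t0 (tK_lt _ tr).
have := near1 t; rewrite t0 td1 => /(_ isT) close1.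
have := near2 t'; rewrite t'0 (le_lt_trans t'T (tK_lt _ td2)) => /(_ isT) close2.
have T1 := ler_enorm_distD (hbar h a) (hdir a t) (hdir a' t').
have T2 := ler_enorm_distD (hbar h a') (hbar h a) (hdir a' t').
rewrite (enorm_distC (hbar h a')) in T2; lra.
Qed.

Lemma hbar_bilipschitz_sphere a a' : sphere a -> sphere a' ->
  K1 / (2 * K2) * en (a - a') <= en (hbar h a - hbar h a') /\
  en (hbar h a - hbar h a') <= 2 * K2 / K1 * en (a - a').
Proof. by move=> sa sa'; split; [apply: hbar_lower | apply: hbar_lipschitz]. Qed.

Lemma dir_set_image_hbar (B : set V) a :
  dir_set B a -> dir_set (h @` (B `&` eball0 r)) (hbar h a).
Proof.
move=> /dir_setP[sa DB]; apply/dir_setP; split => [|e d e0 d0]; first exact: sphere_hbar.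
have e2 : 0 < e / 2 by rewrite divr_gt0.
have [t1 t1_gt0 near_a] := hdir_near_hbar sa e2.
set eta := e * K1 / (4 * K2).
have eta0 : 0 < eta by rewrite divr_gt0 ?mulr_gt0.
have C_eta : 2 * K2 / K1 * eta = e / 2 by rewrite /eta; field; rewrite !gt_eqF.
have [de [de0 de_t1 de_r de_d]] := exists_gt0_lt3 t1_gt0 r_gt0 (divr_gt0 d0 K2_gt0).
have [w [Bw w0 w_de wa]] := DB _ _ eta0 de0.
have rw : eball0 r w := lt_trans w_de de_r.
exists (h w); split.
- by exists w.
- exact: h_neq0.
- apply: le_lt_trans (enorm_h_le rw) _.
  by rewrite -ltr_pdivlMl // mulrC (lt_trans w_de de_d).
- have := near_a (en w); rewrite enorm_gt0 // (lt_trans w_de de_t1) => /(_ isT).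
  have := hdir_normalize_close sa rw w0.
  have := ler_wpM2l (divr_ge0 (mulr_ge0 (ler0n _ 2) (ltW K2_gt0)) (ltW K1_gt0)) (ltW wa).
  have := ler_enorm_distD (hdir a (en w)) (normalize (h w)) (hbar h a).
  rewrite (enorm_distC (normalize (h w)) (hdir a (en w))) C_eta; lra.
Qed.

Lemma hbar_eq_of_approx a c : sphere a ->
  (forall e d, 0 < e -> 0 < d -> exists x,
     [/\ eball0 r x, x != 0, en x < d, en (normalize x - a) < e
       & en (normalize (h x) - c) < e]) ->
  hbar h a = c.
Proof.
move=> sa approx; apply/eqP; rewrite -subr_eq0; apply/eqP/enorm_eq0/eqP.
rewrite eq_le enorm_ge0 andbT; apply/ler_addgt0Pr => e e0; rewrite add0r.
have e3 : 0 < e / 3 by rewrite divr_gt0.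
have [t1 t1_gt0 near_a] := hdir_near_hbar sa e3.
set eta := e * K1 / (6 * K2).
have eta0 : 0 < eta by rewrite divr_gt0 ?mulr_gt0.
have C_eta : 2 * K2 / K1 * eta = e / 3 by rewrite /eta; field; rewrite !gt_eqF.
have eta_le : eta <= e / 3.
  rewrite /eta ler_pdivrMr ?mulr_gt0 //; have := ler_wpM2l (ltW e0) K12.
  have := mulr_ge0 (ltW e0) (ltW K2_gt0); lra.
have [x [rx x0 x_t1 xa xc]] := approx _ _ eta0 t1_gt0.
have := near_a (en x); rewrite enorm_gt0 // x_t1 => /(_ isT).
have := hdir_normalize_close sa rx x0.
have := ler_wpM2l (divr_ge0 (mulr_ge0 (ler0n _ 2) (ltW K2_gt0)) (ltW K1_gt0)) (ltW xa).
have := ler_enorm_distD (hdir a (en x)) (hbar h a) c.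
have := ler_enorm_distD (normalize (h x)) (hdir a (en x)) c.
rewrite (enorm_distC (hbar h a) (hdir a (en x))) C_eta; lra.
Qed.

Lemma dir_set_image_hbar_inv (B : set V) c :
  dir_set (h @` (B `&` eball0 r)) c -> exists2 a, dir_set B a & hbar h a = c.
Proof.
move=> /dir_setP[sc DhB].
have pick_X (s : R) : exists x : V, 0 < s ->
    [/\ (B `&` eball0 r) x, x != 0, en (h x) < s & en (normalize (h x) - c) < s].
  have [s0|_] := ltP 0 s; last by exists 0.
  have [_ [[x Bx <-] hx0 hx_s hx_c]] := DhB _ _ s0 s0.
  by exists x => _; split => //; apply: contraNneq hx0 => ->; rewrite h0.
have [X HX] := choice pick_X.
have Fs : (0 : R)^'+ (fun s => sphere (normalize (X s))).
  apply/near_at_right0P; exists 1 => // s /andP[s0 _].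
  by have [_ x0 _ _] := HX s s0; apply: sphere_normalize.
have [a sa clus] := exists_cluster_sphere (at_right_proper_filter 0) Fs.
have approx e d : 0 < e -> 0 < d -> exists x,
    [/\ (B `&` eball0 r) x, x != 0, en x < d, en (normalize x - a) < e
      & en (normalize (h x) - c) < e].
  move=> e0 d0; have m_gt0 : 0 < Num.min e (K1 * d) by rewrite lt_min e0 mulr_gt0.
  have [s [/andP[s0 s_lt] xa]] : exists s, (0 < s < Num.min e (K1 * d)) /\
      en (normalize (X s) - a) < e.
    by apply: clus => //; apply/near_at_right0P; exists (Num.min e (K1 * d)).
  move: s_lt; rewrite lt_min => /andP[se sKd].
  have [[Bx rx] x0 hx_s hx_c] := HX s s0.
  exists (X s); split => //; last exact: lt_trans hx_c se.
  by rewrite -(ltr_pM2l K1_gt0); apply: le_lt_trans (enorm_h_ge rx) (lt_trans hx_s sKd).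
exists a.
  apply/dir_setP; split => // e d e0 d0.
  by have [x [[Bx _] x0 xd xa _]] := approx e d e0 d0; exists x.
apply: hbar_eq_of_approx sa _ => e d e0 d0.
by have [x [[_ rx] x0 xd xa xc]] := approx e d e0 d0; exists x.
Qed.

Lemma dir_set_image (B : set V) : dir_set (h @` (B `&` eball0 r)) = hbar h @` dir_set B.
Proof.
apply/seteqP; split => c; first by move=> /dir_set_image_hbar_inv [a Da <-]; exists a.
by move=> [a Da <-]; apply: dir_set_image_hbar.
Qed.

Lemma hbar_onto_sphere : (exists2 s, 0 < s & eball0 s `<=` h @` eball0 r) ->
  forall b, sphere b -> exists2 a, sphere a & hbar h a = b.
Proof.
move=> [s s0 hs] b sb.
have Db : dir_set (h @` (setT `&` eball0 r)) b.
  apply/dir_setP; split => // e d e0 d0.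
  have [t [t0 ts td _]] := exists_gt0_lt3 s0 d0 d0.
  have /hs [x rx hx] : eball0 s (t *: b) by rewrite /eball0 /= (enormZ_sphere (ltW t0) sb).
  exists (t *: b); split.
  - by exists x.
  - exact: scale_sphere_neq0.
  - by rewrite (enormZ_sphere (ltW t0) sb).
  - by rewrite normalizeZ_sphere // subrr enorm0.
by have [a /dir_setP[sa _] hab] := dir_set_image_hbar_inv Db; exists a.
Qed.

End SemilineSSP.

Section RadialExtension.
Variables (R : realType) (n : nat).
Local Notation V := 'rV[R]_n.
Local Notation en := (@enorm R n).
Implicit Types x y a : V.
Variables (phi : V -> V) (m M : R).
Hypotheses (m_gt0 : 0 < m) (M_ge0 : 0 <= M).
Hypothesis phi_sphere : forall a, sphere a -> sphere (phi a).
Hypothesis phi_bilip : forall a a', sphere a -> sphere a' ->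
  m * en (a - a') <= en (phi a - phi a') /\ en (phi a - phi a') <= M * en (a - a').

Definition radial x := en x *: phi (normalize x).

Lemma radial0 : radial 0 = 0. Proof. by rewrite /radial enorm0 scale0r. Qed.

Lemma enorm_radial x : en (radial x) = en x.
Proof.
have [->|x0] := eqVneq x 0; first by rewrite radial0.
by rewrite /radial enormZ ger0_norm ?enorm_ge0 // (phi_sphere (sphere_normalize x0)) mulr1.
Qed.

Lemma radial_sphere a : sphere a -> radial a = phi a.
Proof. by move=> sa; rewrite /radial sa scale1r /normalize sa invr1 scale1r. Qed.

Lemma radialB x y : radial x - radial y =
  en x *: (phi (normalize x) - phi (normalize y)) + (en x - en y) *: phi (normalize y).
Proof. by rewrite /radial scalerBr scalerBl addrA subrK. Qed.

Lemma radial_lipschitz x y : en (radial x - radial y) <= (2 * M + 1) * en (x - y).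
Proof.
have [->|x0] := eqVneq x 0.
  by rewrite radial0 !sub0r !enormN enorm_radial; have := mulr_ge0 M_ge0 (enorm_ge0 y); lra.
have [->|y0] := eqVneq y 0.
  by rewrite radial0 !subr0 enorm_radial; have := mulr_ge0 M_ge0 (enorm_ge0 x); lra.
rewrite radialB; apply: le_trans (ler_enormD _ _) _.
rewrite !enormZ (phi_sphere (sphere_normalize y0)) mulr1 ger0_norm ?enorm_ge0 //.
have [_ phi_le] := phi_bilip (sphere_normalize x0) (sphere_normalize y0).
have := ler_wpM2l (enorm_ge0 x) phi_le.
have := ler_wpM2l M_ge0 (ler_enorm_normalizeB x y).
have := ler_enorm_dist_dist x y; lra.
Qed.

Lemma radial_lower x y : m / (m + 2) * en (x - y) <= en (radial x - radial y).
Proof.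
have m2_gt0 : 0 < m + 2 by rewrite addr_gt0.
have k_le1 : m / (m + 2) <= 1 by rewrite ler_pdivrMr // mul1r; lra.
have k_ge0 : 0 <= m / (m + 2) by rewrite divr_ge0 // ltW.
have [->|x0] := eqVneq x 0.
  by rewrite radial0 !sub0r !enormN enorm_radial; have := enorm_ge0 y; nra.
have [->|y0] := eqVneq y 0.
  by rewrite radial0 !subr0 enorm_radial; have := enorm_ge0 x; nra.
set D := en (radial x - radial y); set p := `|en x - en y|.
set q := en x * en (normalize x - normalize y).
(* Both x - y and radial x - radial y split into an angular part (of size q, resp. at
   least m * q) and a radial part of size p. *)
have p_le : p <= D by rewrite /p -(enorm_radial x) -(enorm_radial y) ler_enorm_dist_dist.
have mq_le : m * q <= D + p.
  have [phi_ge _] := phi_bilip (sphere_normalize x0) (sphere_normalize y0).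
  have := ler_wpM2l (enorm_ge0 x) phi_ge.
  have : en (en x *: (phi (normalize x) - phi (normalize y))) <= D + p.
    have -> : en x *: (phi (normalize x) - phi (normalize y)) =
      (radial x - radial y) - (en x - en y) *: phi (normalize y) by rewrite radialB addrK.
    apply: le_trans (ler_enormD _ _) _.
    by rewrite enormN enormZ (phi_sphere (sphere_normalize y0)) mulr1.
  by rewrite enormZ ger0_norm ?enorm_ge0 // /q; lra.
have xy_le : en (x - y) <= q + p.
  rewrite (normalize_decomp x y); apply: le_trans (ler_enormD _ _) _.
  by rewrite (enormZ (en x)) (enormZ (en x - en y)) (sphere_normalize y0) mulr1
    ger0_norm ?enorm_ge0.
rewrite mulrAC ler_pdivrMr //.
have := ler_wpM2l (ltW m_gt0) p_le; have := ler_wpM2l (ltW m_gt0) xy_le; lra.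
Qed.

Lemma radial_inj : injective radial.
Proof.
move=> x y rxy; have := radial_lower x y; rewrite rxy subrr enorm0.
have k_gt0 : 0 < m / (m + 2) by rewrite divr_gt0 // addr_gt0.
rewrite pmulr_rle0 // => dxy; apply/eqP; rewrite -subr_eq0; apply/eqP/enorm_eq0.
by apply/eqP; rewrite eq_le dxy enorm_ge0.
Qed.

Hypothesis phi_onto : forall b, sphere b -> exists2 a, sphere a & phi a = b.

Lemma radial_surj y : exists x, radial x = y.
Proof.
have [->|y0] := eqVneq y 0; first by exists 0; rewrite radial0.
have [a sa phia] := phi_onto (sphere_normalize y0); exists (en y *: a).
have y_gt0 := enorm_gt0 y0.
by rewrite /radial normalizeZ_sphere // (enormZ_sphere (ltW y_gt0) sa) phia enorm_scale_normalize.
Qed.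

Lemma radial_extension : exists H : V -> V,
  [/\ bijective H, bilipschitz_on setT H & forall a, sphere a -> H a = phi a].
Proof.
exists radial; split; last exact: radial_sphere.
  have [g radialK] := choice radial_surj.
  by exists g => // x; apply: radial_inj; rewrite radialK.
exists (m / (m + 2)), (2 * M + 1); split.
- by rewrite divr_gt0 // addr_gt0.
- have m2_gt0 : 0 < m + 2 by rewrite addr_gt0.
  apply: (@le_trans _ _ 1); first by rewrite ler_pdivrMr // mul1r; lra.
  by rewrite lerDr mulr_ge0.
- by move=> x y _ _; split; [exact: radial_lower | exact: radial_lipschitz].
Qed.

End RadialExtension.

Section HausdorffDimension.
Variables (R : realType) (n : nat).
Local Notation V := 'rV[R]_n.
Local Notation en := (@enorm R n).

Lemma hcover_term_ge0 s (U : set V) : (0 <= hcover_term s U)%E.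
Proof. by rewrite /hcover_term; case: pselect => // U0; rewrite lee_fin powR_ge0. Qed.

Lemma hausdorff_pre_ge0 s d (E : set V) : (0 <= hausdorff_pre s d E)%E.
Proof.
apply/ereal_infP => y [U _ Uy]; rewrite -Uy.
by apply: nneseries_ge0 => k _ _; apply: hcover_term_ge0.
Qed.

Lemma hausdorff_measure_eq0P s (E : set V) :
  hausdorff_measure s E = 0%E <-> forall d, 0 < d -> hausdorff_pre s d E = 0%E.
Proof.
split => [E0 d d0 | pre0].
  apply/eqP; rewrite eq_le hausdorff_pre_ge0 andbT -E0.
  by apply: ereal_sup_ubound; exists d.
apply/eqP; rewrite eq_le; apply/andP; split.
  by apply/ereal_supP => y [d d0 <-]; rewrite pre0.
apply: le_ereal_sup_tmp; exists (hausdorff_pre s 1 E); last exact: hausdorff_pre_ge0.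
by exists 1 => //=; apply: ltr01.
Qed.

Lemma ediam_ge_enorm (U : set V) x y : U x -> U y -> ((en (x - y))%:E <= ediam U)%E.
Proof. by move=> Ux Uy; apply: ereal_sup_ubound; exists x, y. Qed.

Lemma ediam_ge0 (U : set V) x : U x -> (0 <= ediam U)%E.
Proof. by move=> Ux; have := ediam_ge_enorm Ux Ux; rewrite subrr enorm0. Qed.

Lemma ediam_le (U : set V) (D : R) :
  (forall x y, U x -> U y -> en (x - y) <= D) -> (ediam U <= D%:E)%E.
Proof. by move=> UD; apply/ereal_supP => z [x [y [Ux Uy ->]]]; rewrite lee_fin UD. Qed.

Lemma ediam_fin_num (U : set V) x (d : R) :
  U x -> (ediam U <= d%:E)%E -> ediam U \is a fin_num.
Proof. by move=> Ux Ud; rewrite ge0_fin_numE ?(ediam_ge0 Ux) // (le_lt_trans Ud) ?ltey. Qed.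

Section LipschitzImage.
Variables (f : V -> V) (K : R).
Hypotheses (K_gt0 : 0 < K) (f_lip : forall x y, en (f x - f y) <= K * en (x - y)).

Lemma ediam_image_le (U : set V) : ediam U \is a fin_num ->
  (ediam (f @` U) <= (K * fine (ediam U))%:E)%E.
Proof.
move=> Ufin; apply: ediam_le => _ _ [x Ux <-] [y Uy <-].
apply: le_trans (f_lip _ _) _; rewrite ler_pM2l //.
by rewrite -lee_fin fineK //; apply: ediam_ge_enorm.
Qed.

Lemma hcover_term_image_le s (U : set V) (d : R) : 0 <= s -> (ediam U <= d%:E)%E ->
  (hcover_term s (f @` U) <= (K `^ s)%:E * hcover_term s U)%E.
Proof.
move=> s0 Ud; rewrite /hcover_term.
case: (pselect (U = set0)) => [U0|Un0]; case: (pselect (f @` U = set0)) => [fU0|fUn0].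
- by rewrite mule0.
- by exfalso; apply: fUn0; rewrite U0 image_set0.
- by rewrite -EFinM lee_fin mulr_ge0 // powR_ge0.
have [x Ux] : exists x, U x by apply/set0P/eqP.
have Ufin := ediam_fin_num Ux Ud.
have fU_le := ediam_image_le Ufin.
have fUfin : ediam (f @` U) \is a fin_num by apply: ediam_fin_num fU_le; exists x.
rewrite -EFinM lee_fin -powRM ?(ltW K_gt0) ?fine_ge0 ?(ediam_ge0 Ux) //.
apply: ge0_ler_powR; rewrite ?nnegrE ?fine_ge0 ?(ediam_ge0 (imageP f Ux)) //.
  by rewrite mulr_ge0 ?(ltW K_gt0) ?fine_ge0 ?(ediam_ge0 Ux).
by rewrite -lee_fin fineK.
Qed.

Lemma hausdorff_measure_image_eq0 s (E : set V) : 0 <= s ->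
  hausdorff_measure s E = 0%E -> hausdorff_measure s (f @` E) = 0%E.
Proof.
move=> s0 /hausdorff_measure_eq0P E0; apply/hausdorff_measure_eq0P => d d0.
apply/eqP; rewrite eq_le hausdorff_pre_ge0 andbT.
apply/lee_addgt0Pr => e e0; rewrite add0e.
set c := K `^ s; have c_gt0 : 0 < c by apply: powR_gt0.
(* A (d / K)-cover of E of cost < e / c maps to a d-cover of f @` E of cost < e. *)
have : (hausdorff_pre s (d / K) E < (e / c)%:E)%E.
  by rewrite E0 ?lte_fin ?divr_gt0.
move=> /ereal_inf_lt [_ [U [cover diamU] <-] costU].
apply: (@le_trans _ _ (\sum_(0 <= k <oo) hcover_term s (f @` U k))%E).
  apply: ereal_inf_lbound; exists (fun k => f @` U k) => //; split.
    by move=> _ [x Ex <-]; have [k _ Ukx] := cover x Ex; exists k => //; exists x.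
  move=> k; apply: ediam_le => _ _ [x Ux <-] [y Uy <-]; apply: le_trans (f_lip _ _) _.
  rewrite -ler_pdivlMl // mulrC -lee_fin.
  exact: le_trans (ediam_ge_enorm Ux Uy) (diamU k).
apply: (@le_trans _ _ (\sum_(0 <= k <oo) (c%:E * hcover_term s (U k)))%E).
  apply: lee_nneseries => [k _ _|k _]; first exact: hcover_term_ge0.
  exact: hcover_term_image_le s0 (diamU k).
rewrite nneseriesZl; last by move=> k _; apply: hcover_term_ge0.
have -> : e = c * (e / c) by rewrite mulrC divfK // gt_eqF.
by rewrite EFinM lee_wpmul2l ?lee_fin ?ltW.
Qed.

End LipschitzImage.

Lemma hausdorff_dim_bilipschitz_image (f : V -> V) (E : set V) :
  bijective f -> bilipschitz_on setT f -> hausdorff_dim (f @` E) = hausdorff_dim E.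
Proof.
move=> [g fK gK] [K1 [K2 [K1_gt0 K12 f_bilip]]].
have K2_gt0 : 0 < K2 := lt_le_trans K1_gt0 K12.
have f_lip x y : en (f x - f y) <= K2 * en (x - y) by have [] := f_bilip x y I I.
have g_lip x y : en (g x - g y) <= K1^-1 * en (x - y).
  rewrite -(ler_pM2l K1_gt0) mulrA mulfV ?gt_eqF // mul1r.
  by have [+ _] := f_bilip (g x) (g y) I I; rewrite !gK.
have gfE : g @` (f @` E) = E by rewrite image_comp eq_image_id // => x _ /=; rewrite fK.
rewrite /hausdorff_dim; congr ereal_inf; congr image.
apply/seteqP; split => s /= [s0 Es]; split => //.
  have K1V_gt0 : 0 < K1^-1 by rewrite invr_gt0.
  rewrite -gfE; exact: (hausdorff_measure_image_eq0 K1V_gt0 g_lip s0 Es).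
exact: (hausdorff_measure_image_eq0 K2_gt0 f_lip s0 Es).
Qed.

End HausdorffDimension.

Unset Implicit Arguments.

Theorem theorem2p25 (R : realType) (n : nat) (h : 'rV[R]_n -> 'rV[R]_n) (r : R) :
  0 < r ->
  h 0 = 0 ->
  bilipschitz_on (eball0 r) h ->
  (exists2 s : R, 0 < s & eball0 s `<=` h @` eball0 r) ->
  (forall a : 'rV[R]_n, sphere a ->
     exists b : 'rV[R]_n, dir_set (h @` (semiline a `&` eball0 r)) = [set b]) ->
  (exists H : 'rV[R]_n -> 'rV[R]_n,
     [/\ bijective H, bilipschitz_on setT H &
         forall a : 'rV[R]_n, sphere a -> H a = hbar h a]) /\
  (forall A : set 'rV[R]_n, closure A 0 ->
     [/\ hbar h @` dir_set A = dir_set (h @` (LD A `&` eball0 r)),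
         dir_set (h @` (LD A `&` eball0 r)) = dir_set (h @` (A `&` eball0 r)) &
         hausdorff_dim (dir_set A) = hausdorff_dim (dir_set (h @` (A `&` eball0 r)))]).
Proof.
move=> r_gt0 h0 [K1 [K2 [K1_gt0 K12 h_bilip]]] h_onto h_ssp.
have K2_gt0 : 0 < K2 := lt_le_trans K1_gt0 K12.
have [H [H_bij H_bilip H_hbar]] : exists H : 'rV[R]_n -> 'rV[R]_n,
    [/\ bijective H, bilipschitz_on setT H & forall a, sphere a -> H a = hbar h a].
  apply: (@radial_extension _ _ _ (K1 / (2 * K2)) (2 * K2 / K1)).
  - by rewrite divr_gt0 ?mulr_gt0.
  - by rewrite divr_ge0 ?mulr_ge0 ?ltW.
  - exact: sphere_hbar r_gt0 h0 K1_gt0 K12 h_bilip h_ssp.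
  - exact: hbar_bilipschitz_sphere r_gt0 h0 K1_gt0 K12 h_bilip h_ssp.
  - exact: hbar_onto_sphere r_gt0 h0 K1_gt0 K12 h_bilip h_ssp h_onto.
split; first by exists H.
(* The identities hold for every A; [closure A 0] only excludes empty direction sets. *)
move=> A _.
have Dh := dir_set_image r_gt0 h0 K1_gt0 K12 h_bilip h_ssp.
rewrite !Dh dir_set_LD; split => //.
rewrite -(hausdorff_dim_bilipschitz_image (dir_set A) H_bij H_bilip).
by congr hausdorff_dim; apply: eq_imagel => a /dir_setP[sa _]; rewrite H_hbar.
Qed.
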